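(* Let $k\ge 1$ and $n\ge k+1$ be integers. The minimum of ${\rm dc}(G)$ over all $k$-connected graphs $G$ of order $n$ equals $\min\{n,3k+2\}$. That is, every $k$-connected graph $G$ of order $n$ satisfies ${\rm dc}(G)\ge \min\{n,3k+2\}$, and some $k$-connected graph of order $n$ attains equality.
   Context: All graphs are finite and simple. A detour of a graph is a longest path in it. The detour covering number ${\rm dc}(G)$ is the number of vertices of $G$ that lie in at least one detour. *)

From mathcomp Require Import all_boot.
From mathcomp Require Import boolp.
Set Implicit Arguments. Unset Strict Implicit. Unset Printing Implicit Defensive.

Definition simple_graph (T : finType) (e : rel T) : Prop :=
  symmetric e /\ irreflexive e.

Definition is_gpath (T : finType) (e : rel T) (p : seq T) : bool :=
  match p with
  | [::] => false
  | x :: q => path e x q && uniq p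
  end.

Definition detour (T : finType) (e : rel T) (p : seq T) : Prop :=
  is_gpath e p /\ forall q : seq T, is_gpath e q -> size q <= size p.

Definition dc (T : finType) (e : rel T) : nat :=
  #|[set v : T | `[< exists p : seq T, detour e p /\ v \in p >]]|.

Definition del_rel (T : finType) (e : rel T) (S : {set T}) : rel T :=
  [rel x y | [&& e x y, x \notin S & y \notin S]].

Definition k_connected (T : finType) (e : rel T) (k : nat) : Prop :=
  k < #|T| /\
  forall S : {set T}, #|S| < k ->
    forall x y : T, x \notin S -> y \notin S -> connect (del_rel e S) x y.

From mathcomp Require Import all_boot boolp zify.
Set Implicit Arguments. Unset Strict Implicit. Unset Printing Implicit Defensive.

(* Lower bound: if some vertex u lies on no detour, take a detour P for which the
   component C of G - P containing u is as small as possible, and call a vertex of P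
   an attachment when it has a neighbour in C. A path through C joining two
   attachments at distance at most 2 along P yields a longer detour, or one of the same
   length leaving a smaller component; for the same reasons none of the first two or
   last two vertices of P is an attachment. The attachments separate C from the rest
   of P, so there are at least k of them, and |P| >= 3k+2. If every vertex lies on a
   detour, dc(G) = n.
   Upper bound: in K_k joined with (k+1)K_2 + (n-3k-2)K_1, a path meets the vertices
   outside K_k in runs of at most two, one run per gap between hub vertices, and a run
   through an isolated vertex has a single vertex. Hence a path through an isolated
   vertex has at most 3k+1 vertices, whereas the hubs and the k+1 edges form a path
   with 3k+2 vertices. *)

Section WindowCounting.
Variable T : eqType.
Implicit Types (a b : pred T) (s t : seq T).

Lemma count_sparse_suffix a s :
  (forall t, infix t s -> size t <= 3 -> count a t <= 1) ->
  (forall t, suffix t s -> size t <= 2 -> ~~ has a t) ->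
  3 * count a s <= size s.
Proof.
have [N] := ubnP (size s); elim: N s => // N IH s /ltnSE-szs sparse ends.
case: s => [|x [|y [|z s]]] in szs sparse ends *;
  try by move/(_ _ (suffix_refl _) isT): ends; rewrite has_count -eqn0Ngt => /eqP ->.
have w3 := sparse [:: x; y; z] (prefix_infix [:: x; y; z] s) isT.
have IHs : 3 * count a s <= size s.
  apply: IH => [|t ts|t ts]; first by rewrite /= in szs; lia.
  - exact/sparse/(infix_trans ts)/(suffix_infix [:: x; y; z]).
  - exact/ends/(suffix_trans ts)/(suffix_suffix [:: x; y; z]).
rewrite /= in w3 *; lia.
Qed.

Lemma count_sparse a s :
  (forall t, infix t s -> size t <= 3 -> count a t <= 1) ->
  (forall t, prefix t s -> size t <= 2 -> ~~ has a t) ->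
  (forall t, suffix t s -> size t <= 2 -> ~~ has a t) ->
  0 < count a s -> 3 * count a s + 2 <= size s.
Proof.
move=> sparse heads ends pos.
case: s => [|x [|y s]] in sparse heads ends pos *;
  try by case/negP: (heads _ (prefix_refl _) isT); rewrite has_count.
have /norP[ax /norP[ay _]] := heads [:: x; y] (prefix_prefix [:: x; y] s) isT.
have : 3 * count a s <= size s.
  apply: count_sparse_suffix => [t ts|t ts].
  - exact/sparse/(infix_trans ts)/(suffix_infix [:: x; y]).
  - exact/ends/(suffix_trans ts)/(suffix_suffix [:: x; y]).
by rewrite /= (negbTE ax) (negbTE ay) /=; lia.
Qed.

Lemma count_runs a b s :
  (forall x, b x -> ~~ a x) ->
  (forall t, infix t s -> ~~ has a t -> size t + count b t <= 2) ->
  size s + count b s <= 3 * count a s + 2.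
Proof.
move=> bNa runs.
suff gen r : ~~ has a r ->
    (forall t, infix t (r ++ s) -> ~~ has a t -> size t + count b t <= 2) ->
    size r + count b r + (size s + count b s) <= 3 * count a s + 2.
  by have := gen [::] isT runs.
elim: s r {runs} => [|x s IH] r ra runs.
  by rewrite cats0 in runs; have := runs r (infix_refl r) ra; rewrite /=; lia.
case ax: (a x).
  have rb := runs r (prefix_infix r (x :: s)) ra.
  have : size s + count b s <= 3 * count a s + 2.
    by apply: IH [::] isT _ => t ts; exact/runs/infix_catl/(infix_trans ts)/infix_cons.
  by rewrite /= ax (negbTE (contraTN (bNa x) ax)); lia.
have := IH (rcons r x); rewrite cat_rcons has_rcons ax (negbTE ra) => /(_ isT runs).
by rewrite size_rcons -cats1 count_cat /=; lia.
Qed.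

End WindowCounting.

Section Detours.
Variables (T : finType) (e : rel T).
Implicit Types (p q s : seq T) (x y z : T).

Lemma gpathE p : is_gpath e p = [&& p != [::], sorted e p & uniq p].
Proof. by case: p. Qed.

Lemma size_gpath p : is_gpath e p -> size p <= #|T|.
Proof. by rewrite gpathE => /and3P[_ _ /card_uniqP <-]; apply: max_card. Qed.

Lemma exists_detour x : exists p, detour e p.
Proof.
pose has_gpath m := `[< exists p, is_gpath e p /\ size p = m >].
have ex_len : exists m, has_gpath m by exists 1; apply/asboolP; exists [:: x].
have ub_len m : has_gpath m -> m <= #|T| by move/asboolP=> [p [/size_gpath le <-]].
have [m /asboolP[p [gp <-]] max_len] := ex_maxnP ex_len ub_len.
by exists p; split=> // q gq; apply: max_len; apply/asboolP; exists q.
Qed.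

Lemma detour_size_le_dc p : detour e p -> size p <= dc e.
Proof.
move=> dp; have [+ _] := dp; rewrite gpathE => /and3P[_ _ /card_uniqP <-].
rewrite /dc; apply/subset_leq_card/subsetP => v vp.
by rewrite inE; apply/asboolP; exists p.
Qed.

Lemma dc_full : (forall v, exists p, detour e p /\ v \in p) -> dc e = #|T|.
Proof.
move=> covered; rewrite /dc -cardsT; apply: eq_card => v.
by rewrite !inE; apply/asboolP.
Qed.

Lemma detour_head_nbr x p v : detour e (x :: p) -> e v x -> v \in x :: p.
Proof.
move=> [gp max_p] evx; apply: contraT => vp.
have /max_p : is_gpath e (v :: x :: p) by move: gp; rewrite /= evx vp => ->.
by rewrite ltnn.
Qed.

Lemma gpath_splice s1 x m z s2 c q :
  is_gpath e (s1 ++ x :: m ++ z :: s2) -> is_gpath e (c :: q) ->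
  [disjoint c :: q & s1 ++ x :: m ++ z :: s2] -> e x c -> e (last c q) z ->
  is_gpath e (s1 ++ x :: (c :: q) ++ z :: s2).
Proof.
rewrite !gpathE => /and3P[_ sP uP] /and3P[_ pq uq] dis exc elz.
have sub : subseq (s1 ++ x :: z :: s2) (s1 ++ x :: m ++ z :: s2).
  by rewrite cat_subseq //= eqxx suffix_subseq.
apply/and3P; split; first by case: s1 {sP uP dis sub}.
- move: sP; rewrite !sorted_cat_cons => /andP[-> ].
  rewrite cat_path => /andP[_ /andP[_ pz]].
  by rewrite cat_path /= exc (pq : path e c q) elz.
- rewrite (catA s1 [:: x]) uniq_catCA cat_uniq uq -catA /=.
  rewrite (subseq_uniq sub uP) andbT; apply/hasPn => w /(mem_subseq sub) wP.
  by rewrite (disjointFl dis wP).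
Qed.

Lemma detour_swap_head x y s c :
  detour e (x :: y :: s) -> c \notin x :: y :: s -> e c y -> detour e (c :: y :: s).
Proof.
move=> [gP max_P] cP ecy; split; last by move=> q /max_P.
move: gP cP; rewrite !gpathE /= !inE ecy.
by move=> /and4P[/andP[_ ->] _ -> ->] /norP[_ ->].
Qed.

Lemma count_uniq_card s (a : pred T) : uniq s -> count a s = #|[set x in s | a x]|.
Proof.
move=> us; rewrite -size_filter -(card_uniqP (filter_uniq a us)).
by apply: eq_card => x; rewrite mem_filter inE andbC.
Qed.

Lemma del_rel_sym S : symmetric e -> symmetric (del_rel e S).
Proof. by move=> e_sym x y; rewrite /del_rel /= e_sym [(x \notin S) && _]andbC. Qed.

Hypothesis e_sym : symmetric e.

Lemma gpath_rev p : is_gpath e (rev p) = is_gpath e p.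
Proof.
rewrite !gpathE rev_uniq rev_sorted -size_eq0 size_rev size_eq0.
by case: p => //= x p; congr [&& _, _ & _]; apply: eq_path => y z; apply: e_sym.
Qed.

Lemma detour_rev p : detour e p -> detour e (rev p).
Proof. by move=> [gp max_p]; split; [rewrite gpath_rev | rewrite size_rev]. Qed.

End Detours.

Section Components.
Variables (T : finType) (e : rel T) (u : T).
Hypothesis e_sym : symmetric e.
Implicit Types (p q : seq T) (x y v w : T).

Definition component p : {set T} := [set v | connect (del_rel e [set x in p]) u v].

Definition attachment p x : bool := [exists c in component p, e x c].

Lemma component_disjoint p v : u \notin p -> v \in component p -> v \notin p.
Proof.
move=> up; rewrite inE => /connectP[q + ->]; case/lastP: q => [//|q w].
by rewrite last_rcons rcons_path => /andP[_ /and3P[_ _]]; rewrite inE.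
Qed.

Lemma component_step p x y :
  u \notin p -> x \in component p -> e x y -> y \notin p -> y \in component p.
Proof.
move=> up xC exy yp; move: (xC); rewrite !inE => /connect_trans; apply.
by apply: connect1; rewrite /del_rel /= exy !inE yp (component_disjoint up xC).
Qed.

Lemma component_sub p (X : {set T}) v :
  u \notin p -> {in p, forall w, attachment p w -> w \in X} ->
  connect (del_rel e X) u v -> v \in component p.
Proof.
move=> up attX uv.
have cl : closed (del_rel e X) (component p).
  apply: (intro_closed (sym_connect_sym (del_rel_sym X e_sym))) => x y /and3P[exy _ yX] xC.
  have [yp|yp] := boolP (y \in p); last exact: component_step xC exy yp.
  by case/negP: yX; apply: attX => //; apply/existsP; exists x; rewrite xC e_sym.
by rewrite -(closed_connect cl uv) inE connect0.
Qed.

Lemma component_path p c c' : u \notin p ->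
  c \in component p -> c' \in component p ->
  exists q, [/\ is_gpath e (c :: q), last c q = c' & [disjoint c :: q & p]].
Proof.
move=> up cC c'C; have del_sym := sym_connect_sym (del_rel_sym [set x in p] e_sym).
have : connect (del_rel e [set x in p]) c c'.
  by move: cC c'C; rewrite !inE del_sym; apply: connect_trans.
case/connectP => q0 /shortenP[q pq uq _] ->; exists q; split=> //.
  by rewrite gpathE uq andbT /=; apply: sub_path pq => x y /andP[].
rewrite disjoint_subset; apply/subsetP => w /(path_connect pq) cw; rewrite inE.
by apply: (component_disjoint up); move: cC; rewrite !inE => /connect_trans; apply.
Qed.

Lemma component_rev p : component (rev p) = component p.
Proof.
rewrite /component (_ : [set x in rev p] = [set x in p]) //.
by apply/setP => x; rewrite !inE mem_rev.
Qed.

Lemma attachment_rev p : attachment (rev p) =1 attachment p.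
Proof. by move=> x; rewrite /attachment component_rev. Qed.

Lemma component_proper P P' c : u \notin P -> u \notin P' ->
  c \in component P -> c \in P' -> {in P, forall w, attachment P w -> w \in P'} ->
  #|component P'| < #|component P|.
Proof.
move=> uP uP' cC cP' attP'; apply/proper_card/properP; split.
  apply/subsetP => v; rewrite [v \in component P']inE; apply: component_sub uP _.
  by move=> w wP /(attP' w wP); rewrite inE.
by exists c => //; apply: contraL cP'; apply: component_disjoint.
Qed.

Lemma attachments_separate k p w : k_connected e k -> u \notin p ->
  w \in p -> ~~ attachment p w -> k <= #|[set x in p | attachment p x]|.
Proof.
move=> [_ kc] up wp wA; rewrite leqNgt; apply/negP => small.
have uX : u \notin [set x in p | attachment p x] by rewrite inE (negbTE up).
have wX : w \notin [set x in p | attachment p x] by rewrite inE (negbTE wA) andbF.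
have /(component_disjoint up) : w \in component p.
  by apply: component_sub up _ (kc _ small u w uX wX) => x xp xA; rewrite inE xp.
by rewrite wp.
Qed.

Definition minimal_detour P :=
  detour e P /\ forall P', detour e P' -> #|component P| <= #|component P'|.

Lemma exists_minimal_detour : exists P, minimal_detour P.
Proof.
have [p dp] := exists_detour e u.
pose has_comp m := `[< exists P, detour e P /\ #|component P| = m >].
have ex_size : exists m, has_comp m by exists #|component p|; apply/asboolP; exists p.
have [m /asboolP[P [dP <-]] min_m] := ex_minnP ex_size.
by exists P; split=> // P' dP'; apply: min_m; apply/asboolP; exists P'.
Qed.

Lemma minimal_detour_rev P : minimal_detour P -> minimal_detour (rev P).
Proof.
by move=> [dP min_P]; split=> [|P']; [exact: detour_rev | rewrite component_rev; exact: min_P].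
Qed.

Hypothesis u_off : forall p, detour e p -> u \notin p.

Lemma detour_head_attachment x s : detour e (x :: s) -> ~~ attachment (x :: s) x.
Proof.
move=> dP; apply/existsP => -[c /andP[cC exc]].
move/negP: (component_disjoint (u_off dP) cC); apply.
by apply: detour_head_nbr dP _; rewrite e_sym.
Qed.

Lemma minimal_detour_prefix P t :
  minimal_detour P -> prefix t P -> size t <= 2 -> ~~ has (attachment P) t.
Proof.
move=> [dP min_P] /prefixP[r EP]; subst P.
case: t => [|x [|y []]] //= in dP min_P * => _.
all: rewrite orbF (negbTE (detour_head_attachment dP)) //=.
apply/existsP => -[c /andP[cC eyc]].
have dP' : detour e [:: c, y & r].
  apply: (detour_swap_head dP); last by rewrite e_sym.
  exact: component_disjoint (u_off dP) cC.
have := min_P _ dP'; rewrite leqNgt (component_proper (u_off dP) (u_off dP') cC) ?mem_head //.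
move=> w; rewrite inE => /predU1P[-> |wP _]; last by rewrite inE wP orbT.
by rewrite (negbTE (detour_head_attachment dP)).
Qed.

Lemma minimal_detour_adjacent P x y :
  minimal_detour P -> infix [:: x; y] P -> ~~ (attachment P x && attachment P y).
Proof.
move=> [dP _] /infixP[s1 [s2 EP]]; subst P; apply/negP.
case/andP=> /existsP[c /andP[cC exc]] /existsP[c' /andP[c'C eyc']].
have [q [gq lq dis]] := component_path (u_off dP) cC c'C.
have elz : e (last c q) y by rewrite lq e_sym.
have /(proj2 dP) := gpath_splice (m := [::]) dP.1 gq dis exc elz.
by rewrite !size_cat /= size_cat /=; lia.
Qed.

Lemma minimal_detour_gap P x y z :
  minimal_detour P -> infix [:: x; y; z] P -> ~~ (attachment P x && attachment P z).
Proof.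
move=> mP xyz; have /infixP[s1 [s2 EP]] := xyz; subst P; have [dP min_P] := mP.
apply/negP => /andP[Ax /existsP[c' /andP[c'C ezc']]]; have /existsP[c /andP[cC exc]] := Ax.
have [q [gq lq dis]] := component_path (u_off dP) cC c'C.
have elz : e (last c q) z by rewrite lq e_sym.
have gP' := gpath_splice (m := [:: y]) dP.1 gq dis exc elz.
(* P is a longest path, so the rerouting through the component replaces y by c alone *)
have q0 : q = [::].
  apply/eqP; rewrite -size_eq0; move: (proj2 dP _ gP').
  by rewrite !size_cat /= size_cat /=; lia.
subst q; have dP' : detour e (s1 ++ [:: x, c, z & s2]).
  by split=> // r /(proj2 dP); rewrite !size_cat.
have := min_P _ dP'; rewrite leqNgt (component_proper (u_off dP) (u_off dP') cC) //.
  by rewrite mem_cat !inE eqxx !orbT.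
move=> w wP; have [-> Ay|nwy _] := eqVneq w y.
  move/negP: (minimal_detour_adjacent mP (infix_trans (prefix_infix [:: x; y] [:: z]) xyz)).
  by case; rewrite Ax Ay.
move: wP; rewrite !mem_cat !inE (negbTE nwy) /=.
by case/or3P=> [|/orP[]|] ->; rewrite ?orbT.
Qed.

Lemma minimal_detour_sparse P t :
  minimal_detour P -> infix t P -> size t <= 3 -> count (attachment P) t <= 1.
Proof.
move=> mP; case: t => [|x [|y [|z []]]] //= tP _; first by case: (attachment P x).
  by have := minimal_detour_adjacent mP tP; case: (attachment P x); case: (attachment P y).
have := minimal_detour_adjacent mP (infix_trans (prefix_infix [:: x; y] [:: z]) tP).
have := minimal_detour_adjacent mP (infix_trans (suffix_infix [:: x] [:: y; z]) tP).
have := minimal_detour_gap mP tP.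
by case: (attachment P x); case: (attachment P y); case: (attachment P z).
Qed.

Lemma minimal_detour_size k P :
  k_connected e k -> 0 < k -> minimal_detour P -> 3 * k + 2 <= size P.
Proof.
move=> kc k_gt0 mP; have [dP _] := mP; have uP := u_off dP.
have [x xP xA] : exists2 x, x \in P & ~~ attachment P x.
  case: P mP dP {uP} => [_ [] // | x s mP _]; exists x; rewrite ?mem_head //.
  by have := minimal_detour_prefix mP (prefix_prefix [:: x] s) isT; rewrite /= orbF.
have k_le : k <= count (attachment P) P.
  rewrite count_uniq_card; last by case: dP; rewrite gpathE => /and3P[].
  exact: attachments_separate kc uP xP xA.
suff count_le : 3 * count (attachment P) P + 2 <= size P by lia.
apply: count_sparse; last exact: leq_trans k_gt0 k_le.
- by move=> t; apply: minimal_detour_sparse.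
- by move=> t; apply: minimal_detour_prefix.
move=> t tP st; rewrite -has_rev -(eq_has (attachment_rev P)).
by apply: minimal_detour_prefix (minimal_detour_rev mP) tP _; rewrite size_rev.
Qed.

End Components.

Lemma dc_lower_bound (T : finType) (e : rel T) k :
  symmetric e -> k_connected e k -> 0 < k -> minn #|T| (3 * k + 2) <= dc e.
Proof.
move=> e_sym kc k_gt0.
have [[u u_off]|all_on] := pselect (exists u, forall p, detour e p -> u \notin p).
  have [P mP] := exists_minimal_detour e u.
  apply: leq_trans (geq_minr _ _) (leq_trans (minimal_detour_size e_sym u_off kc k_gt0 mP) _).
  exact: detour_size_le_dc mP.1.
rewrite dc_full ?geq_minl // => v; apply: contrapT => off_v; apply: all_on.
by exists v => p dp; apply/negP => vp; apply: off_v; exists p.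
Qed.

Lemma sorted_iota (r : rel nat) m n :
  (forall i, m <= i -> i.+1 < m + n -> r i i.+1) -> sorted r (iota m n).
Proof.
elim: n m => [|[|n] IH] m r_succ //=.
rewrite r_succ //=; last by lia.
by apply: IH => i lei lt_i; apply: r_succ; lia.
Qed.

Lemma card_ord_lt n m : m <= n -> #|[set i : 'I_n | i < m]| = m.
Proof.
move=> le_mn; have inj : injective (widen_ord le_mn) by move=> i j /(congr1 val) /= /val_inj.
rewrite -[RHS]card_ord -cardsT -(card_imset _ inj); apply: eq_card => i.
rewrite inE; apply/idP/imsetP => [lt_im|[j _ ->]]; last exact: (ltn_ord j).
by exists (Ordinal lt_im) => //; apply: val_inj.
Qed.

Lemma gpath_relpre_val n (r : rel nat) (p : seq 'I_n) :
  is_gpath (relpre val r) p = [&& map val p != [::], sorted r (map val p) & uniq (map val p)].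
Proof. by case: p => //= x p; rewrite path_map (mem_map val_inj) (map_inj_uniq val_inj). Qed.

(* K_k joined with (k+1)K_2 + (n-3k-2)K_1 on 0..n-1: the hub is [0, k), the edges
   of the matching are {k+2j, k+2j+1} for j <= k, and vertices from 3k+2 on are
   adjacent to the hub only. *)
Definition hub_matching k : rel nat := fun i j =>
  (i != j) && [|| i < k, j < k | [&& i < 3 * k + 2, j < 3 * k + 2 & (i - k) %/ 2 == (j - k) %/ 2]].

Definition hub_matching_graph k n : rel 'I_n := relpre val (hub_matching k).
Arguments hub_matching_graph : clear implicits.

(* pair 0, hub 0, pair 1, hub 1, ..., hub k-1, pair k *)
Definition hub_matching_walk k : seq nat :=
  [seq if m %% 3 == 2 then m %/ 3 else k + (m %/ 3) * 2 + m %% 3 | m <- iota 0 (3 * k + 2)].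

Lemma hub_matching_graph_simple k n : simple_graph (hub_matching_graph k n).
Proof.
split=> [i j | i]; rewrite /hub_matching_graph /= /hub_matching ?eqxx //.
by apply/idP/idP; lia.
Qed.

Lemma hub_matching_k_connected k n : k < n -> k_connected (hub_matching_graph k n) k.
Proof.
move=> lt_kn; split=> [|S small x y xS yS]; first by rewrite card_ord.
have [s sk sS] : exists2 s : 'I_n, s < k & s \notin S.
  have : ~~ ([set i : 'I_n | i < k] \subset S).
    by apply: contraL small => /subset_leq_card; rewrite card_ord_lt ?(ltnW lt_kn) // -leqNgt.
  by case/subsetPn => s; rewrite inE => sk sS; exists s.
have to_s z : z \notin S -> connect (del_rel (hub_matching_graph k n) S) z s.
  move=> zS; have [-> | zs] := eqVneq z s; first exact: connect0.
  apply: connect1; rewrite /del_rel /hub_matching_graph /= /hub_matching zS sS sk !orbT !andbT.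
  by rewrite val_eqE.
apply: connect_trans (to_s x xS) _.
by rewrite (sym_connect_sym (del_rel_sym S (hub_matching_graph_simple k n).1)); apply: to_s.
Qed.

Lemma hub_matching_walk_gpath k n : 3 * k + 2 <= n ->
  exists p : seq 'I_n, is_gpath (hub_matching_graph k n) p /\ size p = 3 * k + 2.
Proof.
move=> le_n; set w := hub_matching_walk k.
have w_lt : all (fun i => i < n) w.
  by apply/allP => i /mapP[m]; rewrite mem_iota => m_lt ->; case: ifP; lia.
have val_p : map val (pmap insub w : seq 'I_n) = w.
  by rewrite (pmap_filter (insubK _)); apply/all_filterP; rewrite (eq_all (isSome_insub _)).
exists (pmap insub w); rewrite gpath_relpre_val -(size_map val) val_p size_map size_iota.
split=> //; apply/and3P; split; first by rewrite -size_eq0 size_map size_iota addn2.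
  rewrite sorted_map; apply: sorted_iota => i _ /= i_lt.
  by rewrite /hub_matching; case: ifP; case: ifP; lia.
rewrite map_inj_in_uniq ?iota_uniq // => i j; rewrite !mem_iota /=.
by case: ifP; case: ifP; lia.
Qed.

Lemma hub_matching_run k t : sorted (hub_matching k) t -> uniq t ->
  ~~ has (fun i => i < k) t -> size t + count (fun i => 3 * k + 2 <= i) t <= 2.
Proof.
case: t => [|x [|y [|z t]]] //=; first by case: (_ <= x).
  by rewrite /hub_matching !inE; lia.
rewrite /hub_matching !inE => /and3P[exy eyz _] /andP[/norP[_ /norP[xz _]] _].
by case/norP=> xk /norP[yk /norP[zk _]]; move: exy eyz xz; lia.
Qed.

Lemma hub_matching_detour_bounded k n P v : 3 * k + 2 <= n ->
  detour (hub_matching_graph k n) P -> v \in P -> v < 3 * k + 2.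
Proof.
move=> le_n [gP max_P] vP; have [p [/max_P + sp]] := hub_matching_walk_gpath le_n.
rewrite sp => long.
move: gP; rewrite gpath_relpre_val => /and3P[_ sP uP].
pose hub i := i < k; pose isolated i := 3 * k + 2 <= i.
have hubs : count hub (map val P) <= k.
  rewrite -size_filter -[k in _ <= k](size_iota 0 k).
  apply: uniq_leq_size (filter_uniq _ uP) _ => i.
  by rewrite mem_filter mem_iota => /andP[].
have runs : size (map val P) + count isolated (map val P) <= 3 * count hub (map val P) + 2.
  apply: count_runs => [i|t tP]; first by rewrite /hub /isolated; lia.
  by apply: hub_matching_run; [apply: infix_sorted tP sP | apply: infix_uniq tP uP].
rewrite ltnNge; apply/negP => v_isolated.
have : 0 < count isolated (map val P).
  by rewrite -has_count; apply/hasP; exists (val v); rewrite ?(mem_map val_inj).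
by rewrite -(size_map val) in long; lia.
Qed.

Lemma hub_matching_dc_le k n : 3 * k + 2 <= n -> dc (hub_matching_graph k n) <= 3 * k + 2.
Proof.
move=> le_n; rewrite /dc -[X in _ <= X](card_ord_lt le_n).
apply/subset_leq_card/subsetP => v; rewrite !inE => /asboolP[P [dP vP]].
exact: hub_matching_detour_bounded dP vP.
Qed.

Theorem theorem8 (k n : nat) :
  1 <= k -> k.+1 <= n ->
  (forall (T : finType) (e : rel T),
      simple_graph e -> #|T| = n -> k_connected e k ->
      minn n (3 * k + 2) <= dc e) /\
  (exists e : rel 'I_n,
      simple_graph e /\ k_connected e k /\ dc e = minn n (3 * k + 2)).
Proof.
move=> k_gt0 lt_kn; split=> [T e [e_sym _] <- kc|]; first exact: dc_lower_bound.
have simple := hub_matching_graph_simple k n.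
have kc := hub_matching_k_connected lt_kn.
exists (hub_matching_graph k n); do 2!split=> //; apply/eqP; rewrite eqn_leq.
have := dc_lower_bound simple.1 kc k_gt0; rewrite card_ord => -> ; rewrite andbT.
have dc_n : dc (hub_matching_graph k n) <= n by rewrite -[n in _ <= n]card_ord max_card.
rewrite leq_min dc_n; case: (leqP n (3 * k + 2)) => [le_n | /ltnW le_n].
  exact: leq_trans dc_n le_n.
exact: hub_matching_dc_le.
Qed.
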